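(* Let $K$ be a field, $T$ a subgroup of $K^\times$, and $w$ a valuation on the factor hyperfield $K_T$. Then there exists a valuation $v$ on the field $K$ such that $T\subseteq\mathcal{O}_v^\times$ and $w=v_T$, where $v_T(xT):=vx$.
   Context: A hyperfield is $(F,+,\cdot,0,1)$ with $+$ a multivalued operation making $(F,+,0)$ a canonical hypergroup (associative, commutative, unique inverses $-x$ with $0\in x+(-x)$, and $z\in x+y\Rightarrow y\in z+(-x)$), $(F,\cdot)$ commutative with $0$ absorbing, $x(y+z)=xy+xz$, and $F\setminus\{0\}$ an abelian group with neutral $1\neq 0$. Valuation: for an ordered abelian group $\Gamma$ and $\infty>\Gamma$ with $\gamma+\infty=\infty+\gamma=\infty$, a valuation on a hyperfield $F$ is a surjective map $v:F\to\Gamma\cup\{\infty\}$ with $vx=\infty\iff x=0$, $v(xy)=vx+vy$, and $z\in x+y\Rightarrow vz\ge\min\{vx,vy\}$. A field is regarded as a hyperfield with singleton sums, so this includes classical (Krull) valuations. $\mathcal{O}_v^\times:=\{x: vx=0\}$. Factor hyperfield: for a field $K$ and a subgroup $T\le K^\times$, $K_T$ is the set of cosets $xT$ ($x\in K$, $0T=\{0\}$) with $xT+yT:=\{(x+yt)T:t\in T\}$ and $xT\cdot yT:=xyT$. *)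

From HB Require Import structures.
From mathcomp Require Import all_boot all_order all_algebra.
Set Implicit Arguments. Unset Strict Implicit. Unset Printing Implicit Defensive.
Import GRing.Theory.
Local Open Scope ring_scope.

Definition ordered_abelian_group (G : zmodType) (le : rel G) : Prop :=
  [/\ (forall a, le a a),
      (forall a b, le a b -> le b a -> a = b),
      (forall a b c, le a b -> le b c -> le a c),
      (forall a b, le a b \/ le b a)
    & (forall a b c, le a b -> le (a + c) (b + c))].

(* Gamma ∪ {∞} is modelled by [option G], with [None] = ∞. *)
Definition oadd (G : zmodType) (a b : option G) : option G :=
  match a, b with Some x, Some y => Some (x + y) | _, _ => None end.

Definition ole (G : zmodType) (le : rel G) (a b : option G) : bool :=
  match a, b with
  | _, None => true
  | None, Some _ => false
  | Some x, Some y => le x y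
  end.

Definition omin (G : zmodType) (le : rel G) (a b : option G) : option G :=
  if ole le a b then a else b.

Definition subgroup_units (K : fieldType) (T : K -> Prop) : Prop :=
  [/\ T 1,
      (forall x, T x -> x != 0),
      (forall x y, T x -> T y -> T (x * y))
    & (forall x, T x -> T x^-1)].

Definition coset (K : fieldType) (T : K -> Prop) (x : K) : K -> Prop :=
  fun y => exists2 t, T t & y = x * t.

Record factorHF (K : fieldType) (T : K -> Prop) := FactorHF {
  fhf_set : K -> Prop;
  fhf_coset : exists x, fhf_set = coset T x }.

Definition mkKT (K : fieldType) (T : K -> Prop) (x : K) : factorHF T :=
  @FactorHF K T (coset T x) (ex_intro _ x erefl).

Definition hf_add_mem (K : fieldType) (T : K -> Prop) (A B C : factorHF T) : Prop :=
  exists x y t, [/\ A = mkKT T x, B = mkKT T y, T t & C = mkKT T (x + y * t)].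

Definition hf_mul_is (K : fieldType) (T : K -> Prop) (A B C : factorHF T) : Prop :=
  exists x y, [/\ A = mkKT T x, B = mkKT T y & C = mkKT T (x * y)].

Definition hf_valuation (K : fieldType) (T : K -> Prop) (G : zmodType) (le : rel G)
    (w : factorHF T -> option G) : Prop :=
  [/\ (forall g : option G, exists A, w A = g),
      (forall A, w A = None <-> A = mkKT T 0),
      (forall A B C, hf_mul_is A B C -> w C = oadd (w A) (w B))
    & (forall A B C, hf_add_mem A B C -> ole le (omin le (w A) (w B)) (w C))].

Definition field_valuation (K : fieldType) (G : zmodType) (le : rel G)
    (v : K -> option G) : Prop :=
  [/\ (forall g : option G, exists x, v x = g),
      (forall x, v x = None <-> x = 0),
      (forall x y, v (x * y) = oadd (v x) (v y))
    & (forall x y, ole le (omin le (v x) (v y)) (v (x + y)))].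

From mathcomp Require Import all_boot all_order all_algebra.
From Stdlib Require Import FunctionalExtensionality PropExtensionality ProofIrrelevance.
Set Implicit Arguments. Unset Strict Implicit. Unset Printing Implicit Defensive.
Import GRing.Theory.
Local Open Scope ring_scope.

(* The valuation v is forced: v x := w (xT).  Surjectivity, multiplicativity
   and the ultrametric inequality pass from w to v because xT yT = xyT and
   (x + y)T lies in xT + yT; v vanishes only at 0 because 0T = {0} and T
   avoids 0; and for t in T we have tT = 1T, whose value is 0 because
   1T 1T = 1T in the group Gamma. *)

Section FactorHyperfield.

Variables (K : fieldType) (T : K -> Prop).

Lemma factorHF_ext (A B : factorHF T) : fhf_set A = fhf_set B -> A = B.
Proof.
case: A B => a pa [b pb] /= eab; subst b.
by rewrite (proof_irrelevance _ pa pb).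
Qed.

Lemma mkKT_ext (x y : K) :
  (forall z, coset T x z <-> coset T y z) -> mkKT T x = mkKT T y.
Proof.
move=> exy; apply: factorHF_ext => /=; apply: functional_extensionality => z.
exact: propositional_extensionality.
Qed.

Lemma factorHF_mkKT (A : factorHF T) : exists x, A = mkKT T x.
Proof. by case: A => a [x ax]; exists x; apply: factorHF_ext. Qed.

Hypothesis T_subgroup : subgroup_units T.

Lemma mkKT_eq0 (x : K) : mkKT T x = mkKT T 0 -> x = 0.
Proof.
move=> /(f_equal (@fhf_set _ _)) /= ex0; case: T_subgroup => T1 Tnz _ _.
have [t Tt] : coset T x 0 by rewrite ex0; exists 1; rewrite ?mul0r.
by move/esym/eqP; rewrite mulf_eq0 (negPf (Tnz t Tt)) orbF => /eqP.
Qed.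

Lemma mkKT_unit (t : K) : T t -> mkKT T t = mkKT T 1.
Proof.
case: T_subgroup => _ Tnz TM TV Tt; apply: mkKT_ext => z; split.
- by case=> s Ts ->; exists (t * s); rewrite ?mul1r //; apply: TM.
- case=> s Ts ->; exists (t^-1 * s); first by apply: TM; [apply: TV|].
  by rewrite mulrA divff ?mul1r ?Tnz.
Qed.

Variables (G : zmodType) (le : rel G) (w : factorHF T -> option G).
Hypothesis w_valuation : hf_valuation le w.

Lemma hf_valuation_mkKT1 : w (mkKT T 1) = Some 0.
Proof.
case: w_valuation => _ w0 wM _.
have w11 : w (mkKT T 1) = oadd (w (mkKT T 1)) (w (mkKT T 1)).
  by apply: wM; exists 1, 1; rewrite mulr1.
case E1 : (w (mkKT T 1)) w11 => [a|] /=.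
- by case=> /esym; rewrite -[in RHS](addr0 a) => /addrI ->.
- by move: E1 => /w0 /mkKT_eq0 /eqP; rewrite oner_eq0.
Qed.

Lemma field_valuation_hf : field_valuation le (fun x => w (mkKT T x)).
Proof.
case: w_valuation => wsurj w0 wM wD; split.
- move=> g; have [A <-] := wsurj g; have [x ->] := factorHF_mkKT A.
  by exists x.
- by move=> x; rewrite w0; split=> [/mkKT_eq0|->].
- by move=> x y; apply: wM; exists x, y.
- by move=> x y; apply: wD; exists x, y, 1; rewrite mulr1; split; case: T_subgroup.
Qed.

End FactorHyperfield.

Theorem lemma3p6 (K : fieldType) (T : K -> Prop) (G : zmodType) (le : rel G)
    (w : factorHF T -> option G) :
  subgroup_units T ->
  ordered_abelian_group le ->
  hf_valuation le w ->
  exists v : K -> option G,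
    [/\ field_valuation le v,
        (forall t, T t -> v t = Some 0)
      & (forall x, w (mkKT T x) = v x)].
Proof.
move=> T_subgroup _ w_valuation; exists (fun x => w (mkKT T x)); split=> //.
- exact: field_valuation_hf.
- move=> t Tt; rewrite (mkKT_unit T_subgroup Tt).
  exact: (hf_valuation_mkKT1 T_subgroup w_valuation).
Qed.
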